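(* Let $\mathcal{X}\subseteq\mathbb{R}^d$ be nonempty, closed and convex, and let $f:\mathbb{R}^d\to\mathbb{R}$ be differentiable (not necessarily convex) and $L$-smooth on an open set containing $\mathcal{X}$; assume the constrained minimum $f_\star=\min_{x\in\mathcal{X}}f(x)$ is attained. For $\gamma>0$ define $G_\gamma(x):=\frac1\gamma\big(x-\Pi_{\mathcal{X}}(x-\gamma\nabla f(x))\big)$, where $\Pi_{\mathcal{X}}$ is the Euclidean projection onto $\mathcal{X}$. Suppose there are $\mu>0$ and $\gamma\in(0,1/L]$ such that $\frac12\|G_\gamma(x)\|^2\ge\mu(f(x)-f_\star)$ for all $x\in\mathcal{X}$. Let $x_0\in\mathcal{X}$ and $x_{k+1}\in\operatorname{arg\,min}_{z\in\mathcal{X}\cap\mathcal{B}(x_k,t_k)}\langle\nabla f(x_k),z\rangle$ with $t_k:=\gamma\|G_\gamma(x_k)\|$. Then for every $k\ge0$, $f(x_{k+1})\le f(x_k)-\frac\gamma2\|G_\gamma(x_k)\|^2$, and consequently $f(x_k)-f_\star\le(1-\gamma\mu)^k(f(x_0)-f_\star)$ for all $k\ge0$. In particular, for $\gamma=1/L$, $f(x_k)-f_\star\le(1-\mu/L)^k(f(x_0)-f_\star)$.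
   Context: $\|\cdot\|$ is the Euclidean norm, $\mathcal{B}(x,t):=\{y:\|y-x\|\le t\}$; $L$-smooth means $\nabla f$ is $L$-Lipschitz. *)

From HB Require Import structures.
From mathcomp Require Import all_boot all_order all_algebra.
From mathcomp Require Import all_classical all_reals all_analysis.
Set Implicit Arguments. Unset Strict Implicit. Unset Printing Implicit Defensive.
Import Order.TTheory GRing.Theory Num.Theory.
Import numFieldNormedType.Exports.
Local Open Scope classical_set_scope.
Local Open Scope ring_scope.

Section Defs.
Variables (R : realType) (d : nat).
Local Notation V := 'rV[R]_d.

Definition dotp (u v : V) : R := \sum_(i < d) u ord0 i * v ord0 i.
Definition enorm (u : V) : R := Num.sqrt (dotp u u).

Definition eball (x : V) (t : R) : set V := [set y | enorm (y - x) <= t].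

Definition convex_set_ (X : set V) : Prop :=
  forall x y, X x -> X y -> forall t : R, 0 <= t -> t <= 1 ->
    X ((1 - t) *: x + t *: y).

Definition is_proj (X : set V) (y p : V) : Prop :=
  X p /\ forall z, X z -> enorm (y - p) <= enorm (y - z).

(* Euclidean projection Pi_X (well defined, i.e. the unique is_proj point,
   when X is nonempty closed convex) *)
Definition proj (X : set V) (y : V) : V := xget 0 [set p | is_proj X y p].

Definition grad_map (X : set V) (gradf : V -> V) (gamma : R) (x : V) : V :=
  gamma^-1 *: (x - proj X (x - gamma *: gradf x)).

Definition is_argmin (S : set V) (phi : V -> R) (z : V) : Prop :=
  S z /\ forall w, S w -> phi z <= phi w.

End Defs.

From Pilot Require Import Defs.
From HB Require Import structures.
From mathcomp Require Import all_boot all_order all_algebra.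
From mathcomp Require Import all_classical all_reals all_analysis.
From mathcomp Require Import ring lra.
Import Order.TTheory GRing.Theory Num.Theory.
Import numFieldNormedType.Exports.
Local Open Scope classical_set_scope.
Local Open Scope ring_scope.

(* Let p be the projected-gradient point of x_k, so that x_k - p = gamma G_gamma(x_k).
   The variational inequality of the projection gives
   <grad f(x_k), x_k - p> >= ||x_k - p||^2 / gamma, and p is feasible for the
   subproblem defining x_{k+1}, whose displacement is at most ||x_k - p||.  The
   descent lemma f(z) <= f(y) + <grad f(y), z - y> + L/2 ||z - y||^2 with
   L gamma <= 1 then yields the decrease gamma/2 ||G_gamma(x_k)||^2, which the
   gradient-domination inequality turns into the contraction of f(x_k) - f_star
   by the factor 1 - gamma mu. *)

Section InnerProduct.
Context {R : realType} {d : nat}.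
Implicit Types (u v w : 'rV[R]_d) (a : R).

Lemma dotpC u v : dotp u v = dotp v u.
Proof. by apply: eq_bigr => i _; rewrite mulrC. Qed.

Lemma dotpDl u w v : dotp (u + w) v = dotp u v + dotp w v.
Proof. by rewrite /dotp -big_split; apply: eq_bigr => i _; rewrite mxE mulrDl. Qed.

Lemma dotp0l v : dotp 0 v = 0.
Proof. by rewrite /dotp big1 // => i _; rewrite mxE mul0r. Qed.

Lemma dotpZl a u v : dotp (a *: u) v = a * dotp u v.
Proof. by rewrite /dotp mulr_sumr; apply: eq_bigr => i _; rewrite mxE mulrA. Qed.

Lemma dotpNl u v : dotp (- u) v = - dotp u v.
Proof. by rewrite -scaleN1r dotpZl mulN1r. Qed.

Lemma dotpBl u w v : dotp (u - w) v = dotp u v - dotp w v.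
Proof. by rewrite dotpDl dotpNl. Qed.

Lemma dotpZr a u v : dotp u (a *: v) = a * dotp u v.
Proof. by rewrite dotpC dotpZl dotpC. Qed.

Lemma dotpBr u v w : dotp u (v - w) = dotp u v - dotp u w.
Proof. by rewrite !(dotpC u) dotpBl. Qed.

Lemma dotppBZ u w a :
  dotp (u - a *: w) (u - a *: w) = dotp u u - 2 * a * dotp u w + a ^+ 2 * dotp w w.
Proof. by rewrite !(dotpBl, dotpBr, dotpZl, dotpZr) (dotpC w u); ring. Qed.

Lemma dotpp_ge0 u : 0 <= dotp u u.
Proof. by apply: sumr_ge0 => i _; rewrite -expr2 sqr_ge0. Qed.

Lemma dotpp_eq0 u : (dotp u u == 0) = (u == 0).
Proof.
apply/eqP/eqP => [uu0|->]; last exact: dotp0l.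
apply/rowP => j; rewrite mxE; apply/eqP; rewrite -sqrf_eq0 expr2.
by apply/eqP; move: uu0 => /psumr_eq0P; apply => // k _; rewrite -expr2 sqr_ge0.
Qed.

Lemma enorm_ge0 u : 0 <= enorm u.
Proof. exact: sqrtr_ge0. Qed.

Lemma enorm0 : enorm (0 : 'rV[R]_d) = 0.
Proof. by rewrite /enorm dotp0l sqrtr0. Qed.

Lemma sqr_enorm u : enorm u ^+ 2 = dotp u u.
Proof. by rewrite sqr_sqrtr // dotpp_ge0. Qed.

Lemma ler_enorm u v : (enorm u <= enorm v) = (dotp u u <= dotp v v).
Proof. by rewrite ler_sqrt // dotpp_ge0. Qed.

Lemma enormZ a u : enorm (a *: u) = `|a| * enorm u.
Proof. by rewrite /enorm dotpZl dotpZr mulrA -expr2 sqrtrM ?sqr_ge0 // sqrtr_sqr. Qed.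

Lemma enormBC u v : enorm (u - v) = enorm (v - u).
Proof. by rewrite -opprB -scaleN1r enormZ normrN normr1 mul1r. Qed.

Lemma cauchy_schwarz u v : dotp u v <= enorm u * enorm v.
Proof.
have [->|u0] := eqVneq u 0; first by rewrite dotp0l enorm0 mul0r.
have [->|v0] := eqVneq v 0; first by rewrite dotpC dotp0l enorm0 mulr0.
set a := enorm u; set b := enorm v.
have ab_gt0 : 0 < a * b.
  by rewrite mulr_gt0 // sqrtr_gt0 lt_def dotpp_ge0 dotpp_eq0 ?u0 ?v0.
(* expand 0 <= ||b u - a v||^2 = 2 a b (a b - <u, v>) *)
have := dotpp_ge0 (b *: u - a *: v).
rewrite !(dotpBl, dotpBr, dotpZl, dotpZr) -!sqr_enorm -/a -/b (dotpC v u) => h.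
have : 0 <= a * b * (2 * (a * b - dotp u v)) by move: h; congr (_ <= _); ring.
by rewrite pmulr_rge0 //; lra.
Qed.

Lemma normr_le_enorm u : `|u| <= enorm u.
Proof.
change `|u| with (mx_norm u); rewrite mx_normrE; apply: bigmax_le => [|[i j] _] /=; first exact: enorm_ge0.
rewrite (ord1 i) -sqrtr_sqr ler_sqrt ?dotpp_ge0 // /dotp (bigD1 j) //= -expr2 lerDl.
by apply: sumr_ge0 => k _; rewrite -expr2 sqr_ge0.
Qed.

Lemma continuous_enorm : continuous (@enorm R d).
Proof.
move=> u; apply: continuous_comp; last exact: sqrt_continuous.
apply: (continuous_big add_continuous) => i _ {}u.
by apply: continuousM; exact: coord_continuous.
Qed.

End InnerProduct.

Section Projection.
Context {R : realType} {d : nat}.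
Local Notation V := 'rV[R]_d.

Lemma is_proj_exists (X : set V) y : X !=set0 -> closed X -> exists p, is_proj X y p.
Proof.
move=> [x0 Xx0] Xcl.
pose q z := enorm (y - z).
have qc : continuous q.
  move=> z; apply: continuous_comp; last exact: continuous_enorm.
  by apply: continuousB; [exact: cst_continuous | exact: cvg_id].
pose A := X `&` [set z | q z <= q x0].
have Acl : closed A.
  apply: closedI => //.
  by apply: (@preimage_closed _ _ q [set t | t <= q x0]) => //; exact: closed_le.
have Abd : bounded_set A.
  suff : \forall M \near +oo, forall z, A z -> `|z| <= M by [].
  near=> M => z [_ /= qz].
  rewrite -(subKr y z); apply: le_trans (ler_normB _ _) _.
  apply: le_trans (lerD (lexx _) (le_trans (normr_le_enorm _) qz)) _.
  by near: M; apply: nbhs_pinfty_ge; rewrite num_real.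
have A0 : A !=set0 by exists x0; split => /=.
have [p /set_mem [Xp qp] pmin] :=
  EVT_min_rV A0 (bounded_closed_compact Abd Acl) (continuous_subspaceT qc).
exists p; split => // z Xz.
have [qz|qz] := leP (q z) (q x0); first by apply: pmin; rewrite inE.
exact: le_trans qp (ltW qz).
Unshelve. all: end_near.
Qed.

Lemma is_proj_proj (X : set V) y : X !=set0 -> closed X -> is_proj X y (Defs.proj X y).
Proof. by move=> X0 Xcl; rewrite /proj; apply: xgetPex; exact: is_proj_exists. Qed.

(* Moving from p towards z by the step t = a / (a + b) would strictly decrease the
   distance to y if a = <y - p, z - p> were positive. *)
Lemma is_proj_dotp_le0 {X : set V} {y p z : V} :
  convex_set_ X -> is_proj X y p -> X z ->
  dotp (y - p) (z - p) <= 0.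
Proof.
move=> Xcvx [Xp pmin] Xz.
set a := dotp (y - p) (z - p); set b := dotp (z - p) (z - p).
rewrite leNgt; apply/negP => a_gt0.
have b_ge0 : 0 <= b by exact: dotpp_ge0.
pose t := a / (a + b).
have t_gt0 : 0 < t by rewrite divr_gt0 //; lra.
have t_le1 : t <= 1 by rewrite ler_pdivrMr ?mul1r ?lerDl //; lra.
have := pmin _ (Xcvx _ _ Xp Xz t (ltW t_gt0) t_le1).
have -> : y - ((1 - t) *: p + t *: z) = (y - p) - t *: (z - p).
  by apply/rowP => i; rewrite !mxE; ring.
rewrite ler_enorm dotppBZ -/a -/b => h.
have : 0 <= t * (t * b - 2 * a) by move: h; rewrite -subr_ge0; congr (_ <= _); ring.
have : t * b < a by rewrite /t mulrAC ltr_pdivrMr; nra.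
by rewrite pmulr_rge0 //; lra.
Qed.

End Projection.

Section ProjectedGradient.
Context {R : realType} {d : nat}.
Local Notation V := 'rV[R]_d.
Context {X U : set V} {f : V -> R} {gradf : V -> V} {L gamma : R}.
Hypothesis fdiff : forall y, differentiable f y.
Hypothesis fgrad : forall y v, 'd f y v = dotp (gradf y) v.

Lemma is_derive_line (y v : V) (t : R) :
  is_derive t 1 (fun s : R => f (y + s *: v)) (dotp (gradf (y + t *: v)) v).
Proof.
set a := y + t *: v.
have shiftE : (fun h : R => h^-1 *: (((fun s => f (y + s *: v)) \o shift t) (h *: 1)
    - f (y + t *: v))) = (fun h : R => h^-1 *: ((f \o shift a) (h *: v) - f a)).
  apply/funext => h /=; congr (_ *: (f _ - _)).
  by rewrite /a -[h *: 1]/(h * 1) mulr1 scalerDl addrCA.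
split; first by rewrite /derivable shiftE; exact: diff_derivable.
by rewrite /derive shiftE -/(derive f a v) deriveE // fgrad.
Qed.

Hypotheses (Xcvx : convex_set_ X) (XU : X `<=` U).
Hypothesis gradf_lip :
  forall y z, U y -> U z -> enorm (gradf y - gradf z) <= L * enorm (y - z).

(* Mean value theorem for s |-> f(y + s v) - s <grad f(y), v> - s^2 L/2 ||v||^2,
   whose derivative is nonpositive on [0, 1] by Cauchy-Schwarz and the Lipschitz bound. *)
Lemma descent_lemma {y z} : X y -> X z ->
  f z <= f y + dotp (gradf y) (z - y) + L / 2 * enorm (z - y) ^+ 2.
Proof.
move=> Xy Xz; set v := z - y; set c1 := dotp (gradf y) v; set c2 := L / 2 * enorm v ^+ 2.
pose h s := f (y + s *: v) - (s * c1 + s ^+ 2 * c2).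
pose dh s := dotp (gradf (y + s *: v)) v - (c1 + 2 * s * c2).
have h_derive (s : R) : is_derive s (1 : R) h (dh s).
  apply: is_deriveB; first exact: is_derive_line.
  apply: is_derive_eq.
  by rewrite !scaler0 !add0r -[c1%:A]/(c1 * 1) -[s%:A]/(s * 1) !mulr1 /GRing.scale /=; ring.
have h_cont : {within `[0, 1], continuous h}.
  by apply: derivable_within_continuous => s _; exact: ex_derive.
have [c] := MVT ltr01 (fun s _ => h_derive s) h_cont.
rewrite in_itv /= => /andP[c_gt0 c_lt1] h10.
have Xc : X (y + c *: v).
  have -> : y + c *: v = (1 - c) *: y + c *: z by apply/rowP => i; rewrite !mxE; ring.
  by apply: Xcvx => //; lra.
have dh_le0 : dh c <= 0.
  have -> : dh c = dotp (gradf (y + c *: v) - gradf y) v - c * L * enorm v ^+ 2.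
    by rewrite /dh dotpBl /c1 /c2; field.
  rewrite subr_le0; apply: le_trans (cauchy_schwarz _ _) _.
  apply: le_trans (ler_wpM2r (enorm_ge0 _) (gradf_lip _ _ (XU _ Xc) (XU _ Xy))) _.
  by rewrite addrC addKr enormZ (ger0_norm (ltW c_gt0)) expr2 !mulrA (mulrC L).
have : h 1 - h 0 <= 0 by rewrite h10 subr0 mulr1.
rewrite /h scale1r /v addrCA subrr addr0 scale0r addr0 expr1n expr0n /= !mul1r mul0r.
by rewrite -/v; lra.
Qed.

Hypotheses (X0 : X !=set0) (Xcl : closed X).
Hypotheses (L_ge0 : 0 <= L) (gamma_gt0 : 0 < gamma) (L_gamma : L * gamma <= 1).

Lemma scale_grad_map y :
  gamma *: grad_map X gradf gamma y = y - Defs.proj X (y - gamma *: gradf y).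
Proof. by rewrite /grad_map scalerA mulfV ?gt_eqF // scale1r. Qed.

Lemma grad_map_decrease {y z} : X y ->
  is_argmin (X `&` eball y (gamma * enorm (grad_map X gradf gamma y)))
    (dotp (gradf y)) z ->
  f z <= f y - gamma / 2 * enorm (grad_map X gradf gamma y) ^+ 2.
Proof.
move=> Xy [[Xz z_near] z_min].
set p := Defs.proj X (y - gamma *: gradf y).
set t := enorm (grad_map X gradf gamma y); set b := dotp (gradf y) (y - p).
have p_proj : is_proj X (y - gamma *: gradf y) p by exact: is_proj_proj.
have norm_yp : enorm (y - p) = gamma * t.
  by rewrite -scale_grad_map enormZ gtr0_norm.
have zy_le : enorm (z - y) <= gamma * t := z_near.
have b_ge : gamma * t ^+ 2 <= b.
  have := is_proj_dotp_le0 Xcvx p_proj Xy.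
  rewrite addrAC dotpBl dotpZl -sqr_enorm norm_yp -/b subr_le0.
  by rewrite exprMn expr2 -mulrA ler_pM2l.
have lin : dotp (gradf y) (z - y) <= - b.
  have /z_min : (X `&` eball y (gamma * t)) p.
    by split; [case: p_proj | rewrite /eball /= enormBC norm_yp].
  by rewrite /b !dotpBr; lra.
have quad : L / 2 * enorm (z - y) ^+ 2 <= gamma / 2 * t ^+ 2.
  have : L * enorm (z - y) ^+ 2 <= L * (gamma * t) ^+ 2.
    by rewrite ler_wpM2l // ler_sqr ?nnegrE ?enorm_ge0 ?mulr_ge0 ?enorm_ge0 ?(ltW gamma_gt0).
  have : L * gamma * (gamma * t ^+ 2) <= gamma * t ^+ 2.
    by apply: ler_piMl => //; rewrite mulr_ge0 ?sqr_ge0 ?(ltW gamma_gt0).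
  lra.
have := descent_lemma Xy Xz.
lra.
Qed.

End ProjectedGradient.

Lemma geometric_decay {R : realDomainType} {a : nat -> R} {c : R} :
  (forall k, 0 <= a k) -> (forall k, a k.+1 <= c * a k) ->
  forall k, a k <= c ^+ k * a 0%N.
Proof.
move=> a_ge0 a_step.
have [c_ge0|c_lt0] := leP 0 c.
  elim=> [|k IHk]; first by rewrite expr0 mul1r.
  by apply: le_trans (a_step k) _; rewrite exprS -mulrA ler_wpM2l.
have a0 k : a k = 0.
  by apply/eqP; rewrite eq_le a_ge0 andbT; have := a_step k; have := a_ge0 k.+1; nra.
by move=> k; rewrite !a0 mulr0.
Qed.

Theorem theorem8 (R : realType) (d : nat)
  (X : set 'rV[R]_d) (f : 'rV[R]_d -> R) (gradf : 'rV[R]_d -> 'rV[R]_d)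
  (U : set 'rV[R]_d) (L mu gamma : R) (xstar : 'rV[R]_d)
  (x : nat -> 'rV[R]_d) :
  X !=set0 -> closed X -> convex_set_ X ->
  (forall y, differentiable f y) ->
  (forall y v, 'd f y v = dotp (gradf y) v) ->
  open U -> X `<=` U -> 0 < L ->
  (forall y z, U y -> U z -> enorm (gradf y - gradf z) <= L * enorm (y - z)) ->
  X xstar -> (forall y, X y -> f xstar <= f y) ->
  0 < mu -> 0 < gamma -> gamma <= L^-1 ->
  (forall y, X y ->
     2^-1 * enorm (grad_map X gradf gamma y) ^+ 2 >= mu * (f y - f xstar)) ->
  X (x 0%N) ->
  (forall k, is_argmin
       (X `&` eball (x k) (gamma * enorm (grad_map X gradf gamma (x k))))
       (dotp (gradf (x k))) (x k.+1)) ->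
  (forall k, f (x k.+1) <=
       f (x k) - gamma / 2 * enorm (grad_map X gradf gamma (x k)) ^+ 2) /\
  (forall k, f (x k) - f xstar <= (1 - gamma * mu) ^+ k * (f (x 0%N) - f xstar)) /\
  (gamma = L^-1 ->
     forall k, f (x k) - f xstar <= (1 - mu / L) ^+ k * (f (x 0%N) - f xstar)).
Proof.
move=> X0 Xcl Xcvx fdiff fgrad _ XU L_gt0 gradf_lip _ xstar_min _ gamma_gt0
  gamma_le PL Xx0 x_next.
have Xx k : X (x k) by case: k => [|k] //; case: (x_next k) => -[].
have L_gamma : L * gamma <= 1.
  by move: gamma_le; rewrite -[L^-1]mul1r ler_pdivlMr // mulrC.
have decrease k := grad_map_decrease fdiff fgrad Xcvx XU gradf_lip X0 Xcl
  (ltW L_gt0) gamma_gt0 L_gamma (Xx k) (x_next k).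
have contraction k : f (x k.+1) - f xstar <= (1 - gamma * mu) * (f (x k) - f xstar).
  by have := PL _ (Xx k); have := decrease k; nra.
have gap_ge0 k : 0 <= f (x k) - f xstar by rewrite subr_ge0 xstar_min.
have rate := geometric_decay gap_ge0 contraction.
split=> //; split=> // gammaE k.
by rewrite [mu / L]mulrC -gammaE; exact: rate.
Qed.
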